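(* Let $\{Z_t\}$ be random vectors in $\mathcal{Z}$, $\mathcal{M}$ a class of Borel functions $\mathcal{Z}\to\mathbb{R}$, $\ell:\mathcal{Z}\times\mathbb{R}\to\mathbb{R}$ Borel with $\ell(Z_t,f(Z_t))$ integrable, $\ell_t(f):=\ell(Z_t,f(Z_t))$, $Q_n(f)=\frac1n\sum_{t=1}^n\ell_t(f)$, $f_0\in\mathcal{M}$ with $E[Q_n(f_0)]\le E[Q_n(f)]$ for all $f\in\mathcal{M}$, $d_n$ a (semi-)metric on $\mathcal{M}$, $\mathcal{G}_n\subseteq\mathcal{M}$, and $\{\epsilon_n\}$ a positive sequence. Assume: (a.1) there is non-stochastic $f^*_n\in\mathcal{G}_n$ with $d_n(f_n^*,f_0)\le\epsilon_n$ for all $n$; (a.2) there are $C_1,C_2>0$ such that $C_1d_n(f,f_0)^2\le E[Q_n(f)]-E[Q_n(f_0)]\le C_2d_n(f,f_0)^2$ for all $n$ and $f\in\mathcal{G}_n$; (a.3)(iii) there are Borel $m_n:\mathcal{Z}\to[0,\infty)$, positive numbers $b_n$ and a constant $C_3>0$ with $\sup\{E[|\ell_t(f)|\mathbb{1}\{m_n(Z_t)\ge b_n\}]:f\in\mathcal{G}_n,t\in\{1,\dots,n\}\}\le C_3\epsilon_n^2$. For some $c\ge2$ let $\mathcal{H}_n\subset\mathcal{G}_n$ be such that $c\epsilon_n\le d_n(f,f_n^* )$ for each $n$ and all $f\in\mathcal{H}_n$. Then for every $n\in\mathbb{N}$, writing $\mathbb{1}_{nt}=\mathbb{1}\{m_n(Z_t)<b_n\}$,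 $$\sup_{f\in\mathcal{H}_n}\frac1n\sum_{t=1}^n[\ell_t(f_n^* )-\ell_t(f)]\mathbb{1}_{nt}\le\sup_{f\in\mathcal{H}_n}\frac1n\sum_{t=1}^n\Big\{[\ell_t(f_n^* )-\ell_t(f)]\mathbb{1}_{nt}-E\big[(\ell_t(f_n^* )-\ell_t(f))\mathbb{1}_{nt}\big]\Big\}-\big(C_1c^2/4-C_2-2C_3\big)\epsilon_n^2.$$ *)

From HB Require Import structures.
From mathcomp Require Import all_boot all_order all_algebra.
From mathcomp Require Import all_classical all_reals all_analysis.
Set Implicit Arguments. Unset Strict Implicit. Unset Printing Implicit Defensive.
Import Order.TTheory GRing.Theory Num.Theory.
Local Open Scope ring_scope.
Local Open Scope classical_set_scope.

Definition Expect {d} {Omega : measurableType d} {R : realType}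
  (P : probability Omega R) (X : Omega -> R) : R :=
  Rintegral P setT X.

Definition losst {Omega Zs : Type} {R : realType}
  (ell : Zs -> R -> R) (Z : nat -> Omega -> Zs) (t : nat) (f : Zs -> R) : Omega -> R :=
  fun w => ell (Z t w) (f (Z t w)).

Definition Qn {Omega Zs : Type} {R : realType}
  (ell : Zs -> R -> R) (Z : nat -> Omega -> Zs) (n : nat) (f : Zs -> R) : Omega -> R :=
  fun w => n%:R^-1 * \sum_(1 <= t < n.+1) losst ell Z t f w.

Definition ind_nt {Omega Zs : Type} {R : realType}
  (m : nat -> Zs -> R) (b : nat -> R) (Z : nat -> Omega -> Zs) (n t : nat) : Omega -> R :=
  fun w => ((m n (Z t w) < b n)%R)%:R.

From HB Require Import structures.
From mathcomp Require Import all_boot all_order all_algebra.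
From mathcomp Require Import all_classical all_reals all_analysis.
From mathcomp Require Import measurable_realfun lra.
Import Order.TTheory GRing.Theory Num.Theory.
Local Open Scope ring_scope.
Local Open Scope classical_set_scope.

(* Fix f in H_n and split the truncated excess loss [(l_t(f*_n) - l_t(f)) 1_nt]
   into its centred part and its mean.  Dropping the truncation costs at most
   the tail integrals of |l_t(f*_n)| and |l_t(f)|, so by (a.3)(iii) the mean is
   at most E Q_n(f*_n) - E Q_n(f) + 2 C3 eps_n^2.  By (a.1), (a.2) and the
   triangle inequality, d_n(f, f0) >= c eps_n - eps_n >= c eps_n / 2, hence
   E Q_n(f*_n) - E Q_n(f) <= C2 eps_n^2 - C1 c^2 eps_n^2 / 4.  The resulting
   bound on every mean passes to the suprema. *)

Section TruncatedIntegrals.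
Context {d : measure_display} {T : measurableType d} {R : realType}
  (mu : {measure set T -> \bar R}).

Lemma integrable_mul_bool (g : T -> R) (I : T -> bool) :
  mu.-integrable setT (EFin \o g) -> measurable_fun setT I ->
  mu.-integrable setT (EFin \o (fun x => g x * (I x)%:R)).
Proof.
move=> ig mI.
have mIR : measurable_fun setT (fun x => (I x)%:R : R).
  have mbool : measurable_fun setT (fun i : bool => i%:R : R).
    by move=> _ Y _; rewrite setTI.
  exact: measurableT_comp mbool mI.
have bdI : [bounded ((I x)%:R : R) | x in setT].
  exists 1; split; first exact: num_real.
  move=> M M1 x _ /=; case: (I x); rewrite ?normr1 ?normr0 ltW //.
  exact: lt_trans M1.
have := integrableMl measurableT ig mIR bdI.
by apply: eq_integrable => // x _ /=; rewrite EFinM.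
Qed.

Lemma integrable_sumr (I : Type) (s : seq I) (F : I -> T -> R) :
  (forall i, mu.-integrable setT (EFin \o F i)) ->
  mu.-integrable setT (EFin \o fun x => \sum_(i <- s) F i x).
Proof.
move=> iF.
have := @integrable_sum _ _ _ mu _ measurableT _ s xpredT _ (fun i _ => iF i).
by apply: eq_integrable => // x _ /=; rewrite sumEFin.
Qed.

Lemma Rintegral_sum (I : Type) (s : seq I) (F : I -> T -> R) :
  (forall i, mu.-integrable setT (EFin \o F i)) ->
  Rintegral mu setT (fun x => \sum_(i <- s) F i x) =
  \sum_(i <- s) Rintegral mu setT (F i).
Proof.
move=> iF; elim: s => [|i s IH].
  under eq_fun do rewrite big_nil.
  by rewrite Rintegral_cst // mul0r big_nil.
under eq_fun do rewrite big_cons.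
by rewrite RintegralD ?IH ?big_cons //; exact: integrable_sumr.
Qed.

Lemma Rintegral_truncated_diff_le (u v : T -> R) (I J : T -> bool) :
  mu.-integrable setT (EFin \o u) -> mu.-integrable setT (EFin \o v) ->
  measurable_fun setT I -> measurable_fun setT J -> (forall x, I x = ~~ J x) ->
  Rintegral mu setT (fun x => (u x - v x) * (I x)%:R) <=
  Rintegral mu setT u - Rintegral mu setT v
  + (Rintegral mu setT (fun x => `|u x| * (J x)%:R)
  + Rintegral mu setT (fun x => `|v x| * (J x)%:R)).
Proof.
move=> iu iv mI mJ IJ.
have iuv : mu.-integrable setT (EFin \o fun x => u x - v x).
  have := integrableB measurableT iu iv.
  by apply: eq_integrable => // x _ /=; rewrite EFinB.
have iuJ := integrable_mul_bool _ _ (integrable_norm iu) mJ.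
have ivJ := integrable_mul_bool _ _ (integrable_norm iv) mJ.
have iJ : mu.-integrable setT
    (EFin \o fun x => `|u x| * (J x)%:R + `|v x| * (J x)%:R).
  have := integrableD measurableT iuJ ivJ.
  by apply: eq_integrable => // x _ /=; rewrite EFinD.
rewrite -(RintegralB measurableT iu iv) -(RintegralD measurableT iuJ ivJ).
rewrite -RintegralD //; apply: le_Rintegral => //.
- exact: integrable_mul_bool.
- have := integrableD measurableT iuv iJ.
  by apply: eq_integrable => // x _ /=; rewrite EFinD.
move=> x _ /=; rewrite IJ; case: (J x) => /=; rewrite ?mulr1 ?mulr0 ?addr0 //.
have := ler_norm (- u x); have := ler_norm (v x); rewrite normrN; lra.
Qed.

End TruncatedIntegrals.

Section TruncatedExpectedLoss.
Context {d : measure_display} {Omega : measurableType d} {R : realType}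
  (P : probability Omega R) {Zs : Type} (ell : Zs -> R -> R)
  (Z : nat -> Omega -> Zs) (m : nat -> Zs -> R) (b : nat -> R).

Local Notation integrable_loss f :=
  (forall t, P.-integrable setT (EFin \o losst ell Z t f)).

Lemma Expect_Qn n f : integrable_loss f ->
  Expect P (Qn ell Z n f) = n%:R^-1 * \sum_(1 <= t < n.+1) Expect P (losst ell Z t f).
Proof.
move=> il; rewrite /Expect /Qn RintegralZl ?Rintegral_sum //.
exact: integrable_sumr.
Qed.

Lemma Expect_truncated_excess_le n f g (delta : R) : (0 < n)%N ->
  integrable_loss f -> integrable_loss g ->
  (forall t, measurable_fun setT (fun w => m n (Z t w))) ->
  (forall t, (1 <= t <= n)%N ->
     Expect P (fun w => `|losst ell Z t f w| * (b n <= m n (Z t w))%R%:R) <= delta) ->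
  (forall t, (1 <= t <= n)%N ->
     Expect P (fun w => `|losst ell Z t g w| * (b n <= m n (Z t w))%R%:R) <= delta) ->
  n%:R^-1 * \sum_(1 <= t < n.+1)
    Expect P (fun w => (losst ell Z t g w - losst ell Z t f w) * ind_nt m b Z n t w)
  <= Expect P (Qn ell Z n g) - Expect P (Qn ell Z n f) + 2 * delta.
Proof.
move=> n_gt0 ilf ilg mmZ tailf tailg.
have termwise t : (1 <= t <= n)%N ->
    Expect P (fun w => (losst ell Z t g w - losst ell Z t f w) * ind_nt m b Z n t w)
    <= Expect P (losst ell Z t g) - Expect P (losst ell Z t f) + 2 * delta.
  move=> tn; apply: le_trans.
    apply: (Rintegral_truncated_diff_le P _ _ _ _ (ilg t) (ilf t)
      (measurable_fun_ltr (mmZ t) (measurable_cst _))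
      (measurable_fun_ler (measurable_cst _) (mmZ t))).
    by move=> w; rewrite ltNge.
  by have := tailf t tn; have := tailg t tn; rewrite /Expect; lra.
have nK x : n%:R^-1 * (x *+ n) = x :> R.
  by rewrite -[x *+ n]mulr_natr mulrC mulfK // pnatr_eq0 -lt0n.
rewrite !Expect_Qn // -mulrBr -[2 * delta]nK -mulrDr ler_wpM2l ?invr_ge0 //.
have -> : (2 * delta) *+ n = \sum_(1 <= t < n.+1) 2 * delta.
  by rewrite sumr_const_nat subn1.
rewrite -sumrB -big_split.
by apply: ler_sum_nat => t /andP[t1 tn]; apply: termwise; rewrite t1 -ltnS.
Qed.

End TruncatedExpectedLoss.

Lemma excess_risk_gap {R : realFieldType} {C1 C2 c e ds df rs rf : R} :
  0 <= C1 -> 0 <= C2 -> 2 <= c -> 0 <= ds <= e -> c * e <= df + ds ->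
  C1 * df ^+ 2 <= rf -> rs <= C2 * ds ^+ 2 ->
  rs - rf <= - ((C1 * c ^+ 2 / 4 - C2) * e ^+ 2).
Proof.
move=> C1_ge0 C2_ge0 c_ge2 /andP[ds_ge0 ds_le] sep lo hi.
have df_ge : c * e / 2 <= df by nra.
have : (c * e / 2) ^+ 2 <= df ^+ 2 by rewrite ler_pXn2r ?nnegrE //; nra.
have : ds ^+ 2 <= e ^+ 2 by rewrite ler_pXn2r ?nnegrE //; lra.
nra.
Qed.

Lemma ereal_sup_image_le_shift (R : realType) (X : Type) (A : set X)
    (F G : X -> R) (k : R) :
  (forall x, A x -> F x <= G x - k) ->
  (ereal_sup [set (F x)%:E | x in A] <= ereal_sup [set (G x)%:E | x in A] - k%:E)%E.
Proof.
move=> FG; apply: ge_ereal_sup => _ [x Ax <-].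
apply: (@le_trans _ _ (G x - k)%:E); first by rewrite lee_fin FG.
by rewrite EFinB leeB // ereal_sup_ubound //; exists x.
Qed.

Theorem lemmaC1 (R : realType) (d : measure_display) (Omega : measurableType d)
  (P : probability Omega R) (dz : measure_display) (Zs : measurableType dz)
  (Z : nat -> Omega -> Zs)
  (M : set (Zs -> R))
  (ell : Zs -> R -> R)
  (f0 : Zs -> R)
  (dn : nat -> (Zs -> R) -> (Zs -> R) -> R)
  (G : nat -> set (Zs -> R))
  (eps : nat -> R)
  (fstar : nat -> Zs -> R)
  (C1 C2 C3 : R)
  (m : nat -> Zs -> R) (b : nat -> R)
  (c : R) (H : nat -> set (Zs -> R)) :
  (* random vectors Z_t *)
  (forall t, measurable_fun setT (Z t)) ->
  (* M is a class of Borel functions *)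
  (forall f, M f -> measurable_fun setT f) ->
  (* ell Borel on Z x R *)
  measurable_fun setT (fun p : Zs * R => ell p.1 p.2) ->
  (* ell(Z_t, f(Z_t)) integrable *)
  (forall f t, M f -> P.-integrable setT (fun w => (losst ell Z t f w)%:E)) ->
  (* f0 minimizes E[Q_n] over M *)
  M f0 ->
  (forall n f, (0 < n)%N -> M f -> Expect P (Qn ell Z n f0) <= Expect P (Qn ell Z n f)) ->
  (* d_n is a semi-metric on M *)
  (forall n f g, M f -> M g -> 0 <= dn n f g) ->
  (forall n f, M f -> dn n f f = 0) ->
  (forall n f g, M f -> M g -> dn n f g = dn n g f) ->
  (forall n f g h, M f -> M g -> M h -> dn n f h <= dn n f g + dn n g h) ->
  (forall n, G n `<=` M) ->
  (forall n, 0 < eps n) ->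
  (* (a.1) *)
  (forall n, (0 < n)%N -> G n (fstar n) /\ dn n (fstar n) f0 <= eps n) ->
  (* (a.2) *)
  0 < C1 -> 0 < C2 ->
  (forall n f, (0 < n)%N -> G n f ->
     C1 * dn n f f0 ^+ 2 <= Expect P (Qn ell Z n f) - Expect P (Qn ell Z n f0) /\
     Expect P (Qn ell Z n f) - Expect P (Qn ell Z n f0) <= C2 * dn n f f0 ^+ 2) ->
  (* (a.3)(iii) *)
  (forall n, measurable_fun setT (m n)) ->
  (forall n z, 0 <= m n z) ->
  (forall n, 0 < b n) ->
  0 < C3 ->
  (forall n f t, (0 < n)%N -> G n f -> (1 <= t <= n)%N ->
     Expect P (fun w => `|losst ell Z t f w| * ((b n <= m n (Z t w))%R)%:R)
       <= C3 * eps n ^+ 2) ->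
  (* H_n and c *)
  2 <= c ->
  (forall n, H n `<=` G n) ->
  (forall n f, (0 < n)%N -> H n f -> c * eps n <= dn n f (fstar n)) ->
  forall n, (0 < n)%N -> forall w : Omega,
    (ereal_sup [set (n%:R^-1 * \sum_(1 <= t < n.+1)
                  (losst ell Z t (fstar n) w - losst ell Z t f w) * ind_nt m b Z n t w)%:E
               | f in H n]
    <= (ereal_sup [set (n%:R^-1 * \sum_(1 <= t < n.+1)
                  ((losst ell Z t (fstar n) w - losst ell Z t f w) * ind_nt m b Z n t w
                   - Expect P (fun w' => (losst ell Z t (fstar n) w' - losst ell Z t f w')
                                          * ind_nt m b Z n t w')))%:E
               | f in H n]
        - ((C1 * c ^+ 2 / 4 - C2 - 2 * C3) * eps n ^+ 2)%:E))%E.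
Proof.
move=> mZ _ _ int_loss Mf0 _ dn_ge0 _ dn_sym dn_tri GM _ a1 C1_gt0 C2_gt0 a2 mm
  _ _ _ a3 c_ge2 HG Hc n n_gt0 w.
have [Gfs dfs_le] := a1 n n_gt0.
apply: ereal_sup_image_le_shift => f Hf.
have Gf := HG n f Hf.
have [Mf Mfs] := (GM n f Gf, GM n _ Gfs).
have trunc := Expect_truncated_excess_le P ell Z m b _ _ _ _ n_gt0
  (int_loss f ^~ Mf) (int_loss _ ^~ Mfs) (fun t => measurableT_comp (mm n) (mZ t))
  (fun t => a3 n f t n_gt0 Gf) (fun t => a3 n _ t n_gt0 Gfs).
have sep : c * eps n <= dn n f f0 + dn n (fstar n) f0.
  rewrite (dn_sym n (fstar n) f0) //; apply: le_trans (Hc n f n_gt0 Hf) _.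
  exact: dn_tri.
have ds_bnd : 0 <= dn n (fstar n) f0 <= eps n by rewrite dn_ge0.
have gap := excess_risk_gap (ltW C1_gt0) (ltW C2_gt0) c_ge2 ds_bnd sep
  (a2 n f n_gt0 Gf).1 (a2 n _ n_gt0 Gfs).2.
rewrite sumrB mulrBr; lra.
Qed.
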